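(* Let $N\ge2$ and let $\mathbb{P}_N$ be the path graph on servers $S_1,\dots,S_N$ (edges $\{S_i,S_{i+1}\}$, $i\in[N-1]$). Then for every $r\ge1$, $$\mathscr{C}\left(\mathbb{P}_N^{(r)}\right)\ \ge\ \frac{2}{N}\cdot\frac{1}{2-\frac{1}{2^{r-1}}}.$$
   Context: Multigraph-based PIR model. There are $N$ non-colluding servers $S_1,\dots,S_N$. For a simple graph $G$ on these servers with $K'$ edges, $G^{(r)}$ is the $r$-multigraph obtained by replacing each edge by $r$ parallel edges. There are $K=rK'$ files, each independent and uniform on $\mathbb{F}_2^{L}$; for each edge of $G$, a distinct set of $r$ files is stored exactly on its two endpoints. In a PIR scheme, a user privately chooses a desired file index $\theta$ and generates queries $Q_1,\dots,Q_N$ independent of all files; answer $A_i$ is a deterministic function of $Q_i$ and the files on $S_i$. Reliability: $W_\theta$ is a function of all answers and queries. Privacy: for every server $i$ and every $\theta$, the distribution of $(Q_i^{(\theta)},A_i^{(\theta)},\text{files on }S_i)$ does not depend on $\theta$. The rate is $L/\sum_i H(A_i)$ and the capacity $\mathscr{C}(G^{(r)})$ is the supremum of rates over all schemes, with $L$ arbitrarily large. *)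

From HB Require Import structures.
From mathcomp Require Import all_boot all_order all_algebra.
From mathcomp Require Import boolp classical_sets reals ereal exp.
Set Implicit Arguments. Unset Strict Implicit. Unset Printing Implicit Defensive.
Import Order.TTheory GRing.Theory Num.Theory.
Local Open Scope ring_scope.

(* In G^(r) every edge k carries r files (k,t), t < r, each stored
   exactly on the two endpoints of k. *)
Definition multigraph_stor (N K' r : nat) (ends : 'I_K' -> 'I_N * 'I_N)
  (f : 'I_K' * 'I_r) (i : 'I_N) : bool :=
  (i == (ends f.1).1) || (i == (ends f.1).2).

Lemma path_lt1 (N : nat) (k : 'I_N.-1) : (k < N)%N.
Proof. case: k => k /=; case: N => [|N] //= Hk; exact: (leq_trans Hk). Qed.
Lemma path_lt2 (N : nat) (k : 'I_N.-1) : (k.+1 < N)%N.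
Proof. case: k => k /=; case: N => [|N] //=. Qed.

(* Path graph P_N: edges {S_k, S_(k+1)} for k = 0 .. N-2 (0-indexed). *)
Definition path_ends (N : nat) (k : 'I_N.-1) : 'I_N * 'I_N :=
  (Ordinal (path_lt1 k), Ordinal (path_lt2 k)).

Section PIR.
Variables (R : realType) (N : nat) (F : finType) (stor : F -> 'I_N -> bool).
Variable L : nat.

Definition file_t := 'rV['F_2]_L.
Definition files_t := {ffun F -> file_t}.

Definition restr (i : 'I_N) (w : files_t) : files_t :=
  [ffun f => if stor f i then w f else 0].

(* files are independent and uniform on F_2^L *)
Definition unif : R := (#|{: files_t}|%:R)^-1.

(* A scheme: query alphabet qT, answer alphabet aT, for each desired index
   theta a distribution of the query tuple (Q_1..Q_N) (independent of files),
   answer functions and decoding functions. *)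
Record scheme := Scheme {
  qT : finType;
  aT : finType;
  qdist : F -> {ffun {ffun 'I_N -> qT} -> R};
  ans : 'I_N -> qT -> files_t -> aT;
  dec : F -> {ffun 'I_N -> qT} -> ('I_N -> aT) -> file_t }.
Arguments ans : clear implicits.
Arguments dec : clear implicits.




Variable S : scheme.
Notation qtup := {ffun 'I_N -> qT S}.

Definition prob_view (th : F) (i : 'I_N) (q : qT S) (a : aT S) (v : files_t) : R :=
  \sum_(qs : qtup) \sum_(w : files_t)
     qdist S th qs * unif *
     ((qs i == q) && (ans S i (qs i) w == a) && (restr i w == v))%:R.

Definition prob_ans (th : F) (i : 'I_N) (a : aT S) : R :=
  \sum_(qs : qtup) \sum_(w : files_t)
     qdist S th qs * unif * (ans S i (qs i) w == a)%:R.

Definition log2 (x : R) : R := ln x / ln 2.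

Definition entropy_ans (th : F) (i : 'I_N) : R :=
  - \sum_(a : aT S) (let p := prob_ans th i a in
                     if p == 0 then 0 else p * log2 p).

Definition valid_scheme : Prop :=
  [/\
      (forall th qs, 0 <= qdist S th qs),
      (forall th, \sum_(qs : qtup) qdist S th qs = 1),
      (forall i q w w', restr i w = restr i w' -> ans S i q w = ans S i q w'),
      (forall th qs w, 0 < qdist S th qs ->
          dec S th qs (fun i => ans S i (qs i) w) = w th) &
      (forall i th th' q a v, prob_view th i q a v = prob_view th' i q a v)].

End PIR.

(* Achievable rates L / sum_i H(A_i) (by privacy H(A_i) does not depend on
   theta; we require the value for every theta). *)
Definition rates (R : realType) (N : nat) (F : finType)
  (stor : F -> 'I_N -> bool) : set R :=
  [set x | exists (L : nat) (S : scheme R N F L),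
      valid_scheme stor S /\
      forall th : F, x = L%:R / \sum_(i < N) entropy_ans S th i].

Definition capacity (R : realType) (N : nat) (F : finType)
  (stor : F -> 'I_N -> bool) : \bar R :=
  ereal_sup (EFin @` rates stor).

Definition capacity_multigraph (R : realType) (N K' : nat)
  (ends : 'I_K' -> 'I_N * 'I_N) (r : nat) : \bar R :=
  capacity R (@multigraph_stor N K' r ends).

From HB Require Import structures.
From mathcomp Require Import all_boot all_order all_algebra.
From mathcomp Require Import boolp classical_sets reals ereal exp.
From mathcomp Require Import zify ring lra.
Set Implicit Arguments. Unset Strict Implicit. Unset Printing Implicit Defensive.
Import Order.TTheory GRing.Theory Num.Theory.
Local Open Scope ring_scope.

(* Files on an edge have [2^r] bits, indexed by the vectors of [F_2^r].  For an
   r-tuple of vectors [c], edge [k] defines the [(2^r - 1)]-bit code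
   [E_k(c)(s) = sum_j s_j w_(k,j)[s + c_j]], [s <> 0] (at [s = 0] it vanishes), and
   [E_k(c)(s) + E_k(c + e_t)(s + e_t) = w_(k,t)[s + c_t]], where [c + e_t] adds the
   unit vector [e_t] to every [c_j].  Each edge [k] gets an
   independent uniform mask [c_k], and server [i] answers
   [E_(i-1)(c_(i-1) + d_(i-1)) + E_i(c_i)], where [d] is [e_t] on the edge [k] of
   the desired file [(k, t)] and zero elsewhere.  The answers of servers [0..k]
   telescope to [E_k(c_k)] and the others to [E_k(c_k + e_t)], which yields the
   file.  Whatever the desired file, a server sees two independent uniform masks,
   and by linearity its answer is uniform on [2^(2^r - 1)] values; hence the rate
   [2^r / (N (2^r - 1))]. *)

Lemma addrr_F2 (x : 'F_2) : x + x = 0.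
Proof. exact: addrr_pchar2 (pchar_Fp (isT : prime 2)) x. Qed.

Lemma addrr_lmodF2 (M : lmodType 'F_2) (x : M) : x + x = 0.
Proof. by rewrite -mulr2n -scaler_nat pchar_Fp_0 // scale0r. Qed.

Lemma addrr_ffunF2 (T : finType) (a : {ffun T -> 'F_2}) : a + a = 0.
Proof. by apply/ffunP => x; rewrite !ffunE addrr_F2. Qed.

Lemma sum_shifted_pairs (M : nmodType) (P Q : nat -> M) n :
  \sum_(i < n.+1) ((if i : nat is i'.+1 then Q i' else 0) + P i) =
  \sum_(k < n) (P k + Q k) + P n.
Proof.
elim: n => [|n IHn]; first by rewrite big_ord1 big_ord0 add0r.
by rewrite big_ord_recr IHn big_ord_recr /= !addrA.
Qed.

Lemma F2_neq0 (x : 'F_2) : x != 0 -> x = 1.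
Proof. by case: x => [[|[|m]]] //= ? _; apply/val_inj. Qed.

Lemma natr_card_neq0 (R : numDomainType) (T : finType) (x : T) : #|T|%:R != 0 :> R.
Proof. by rewrite pnatr_eq0 -lt0n; apply/card_gt0P; exists x. Qed.

Lemma log2_expn (R : realType) n : log2 ((2 ^ n)%N%:R : R) = n%:R.
Proof.
rewrite /log2 natrX lnXn ?ltr0n // -[X in X / _]mulr_natr mulrAC mulfV ?mul1r //.
by rewrite gt_eqF // ln_gt0 // ltr1n.
Qed.

(* MathComp does not declare this join of the existing finite and additive
   structures on finite functions. *)
HB.instance Definition _ (aT : finType) (rT : finZmodType) :=
  GRing.Zmodule.on {ffun aT -> rT}.

Lemma sum_fiber_additive (R : numFieldType) (G H : finZmodType) (f : G -> H) :
  {morph f : x y / x + y} -> (forall b, exists x, f x = b) ->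
  forall b, \sum_(x : G) (f x == b)%:R = #|G|%:R / #|H|%:R :> R.
Proof.
move=> fD f_surj.
have fiberE b : \sum_(x : G) (f x == b)%:R = \sum_(x : G) (f x == 0)%:R :> R.
  have [xb <-] := f_surj b; rewrite (reindex_inj (addIr xb)) /=.
  by apply: eq_bigr => x _; rewrite fD -{2}(add0r (f xb)) (inj_eq (addIr _)).
have sum_fibers : \sum_(b : H) \sum_(x : G) (f x == b)%:R = #|G|%:R :> R.
  rewrite exchange_big /= -sumr_const; apply: eq_bigr => x _.
  by rewrite (bigD1 (f x)) //= eqxx big1 ?addr0 // => b /negbTE; rewrite eq_sym => ->.
move=> b; move: sum_fibers; under eq_bigr do rewrite fiberE.
rewrite sumr_const fiberE -[#|xpredT|]/#|H| => <-.
by rewrite -[_ *+ #|H|]mulr_natr mulfK // (natr_card_neq0 _ 0).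
Qed.

Section UniformImage.
Variables (R : numFieldType) (T B : finType) (f : T -> B).

Definition unif_image : {ffun B -> R} :=
  [ffun b => \sum_(x : T) (f x == b)%:R / #|T|%:R].

Lemma sum_unif_image (g : B -> R) :
  \sum_b unif_image b * g b = #|T|%:R^-1 * \sum_(x : T) g (f x).
Proof.
rewrite mulr_sumr; under eq_bigr do rewrite ffunE mulr_suml.
rewrite exchange_big /=; apply: eq_bigr => x _.
rewrite (bigD1 (f x)) //= eqxx big1 ?addr0 ?mul1r // => b /negbTE.
by rewrite eq_sym => ->; rewrite !mul0r.
Qed.

Lemma unif_image_ge0 b : 0 <= unif_image b.
Proof. by rewrite ffunE; apply: sumr_ge0 => x _; rewrite divr_ge0 ?ler0n. Qed.

Lemma unif_image_sum1 : (0 < #|T|)%N -> \sum_b unif_image b = 1.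
Proof.
move=> T_gt0; have := sum_unif_image (fun=> 1); under eq_bigr do rewrite mulr1.
by move=> ->; rewrite sumr_const mulVf // pnatr_eq0 -lt0n.
Qed.

Lemma unif_image_gt0 b : 0 < unif_image b -> exists x, f x = b.
Proof.
rewrite ffunE; case: (pickP (fun x => f x == b)) => [x /eqP|fb0]; first by exists x.
by rewrite big1 ?ltxx // => x _; rewrite fb0 mul0r.
Qed.

End UniformImage.

Lemma entropy_ans_unif (R : realType) N (F : finType) L (S : scheme R N F L) th i :
  (0 < #|aT S|)%N -> (forall a, prob_ans (S:=S) th i a = #|aT S|%:R^-1) ->
  entropy_ans S th i = log2 (#|aT S|%:R : R).
Proof.
move=> A_gt0 unifA; rewrite /entropy_ans; under eq_bigr do rewrite unifA.
have A_pos : (0 : R) < #|aT S|%:R by rewrite ltr0n.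
rewrite sumr_const invr_eq0 (gt_eqF A_pos) /log2 lnV ?posrE // -mulr_natr.
by field; rewrite !gt_eqF // ln_gt0 // ltr1n.
Qed.

Section PathScheme.
Variables (N r : nat).
Local Notation V := 'rV['F_2]_r.

Definition file_len := #|V|.
Definition path_file := ('I_N.-1 * 'I_r)%type.
Definition path_files := files_t path_file file_len.
Definition mask := {ffun 'I_r -> V}.
Definition query := (mask * mask)%type.
Definition answer := {ffun {s : V | s != 0} -> 'F_2}.
Definition edge_masks := {ffun 'I_N.-1 -> mask}.

Definition file_pos (b : 'I_file_len) : V := enum_val b.

Definition file_bit (v : file_t file_len) (x : V) : 'F_2 := v ord0 (enum_rank x).

Lemma file_bit_pos v b : file_bit v (file_pos b) = v ord0 b.
Proof. by rewrite /file_bit /file_pos enum_valK. Qed.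

(* Edges [k >= N - 1] do not exist; their files and masks are taken to be zero. *)
Definition edge_file (w : path_files) (k : nat) (j : 'I_r) : file_t file_len :=
  if insub k is Some k' then w (k', j) else 0.

Definition code_bit (k : nat) (c : mask) (w : path_files) (s : V) : 'F_2 :=
  \sum_(j < r) s ord0 j * file_bit (edge_file w k j) (s + c j).

Definition code (k : nat) (c : mask) (w : path_files) : answer :=
  [ffun s => code_bit k c w (val s)].

Definition answer_at (a : answer) (s : V) : 'F_2 :=
  if insub s is Some s' then a s' else 0.

Lemma answer_at_code k c w s : answer_at (code k c w) s = code_bit k c w s.
Proof.
rewrite /answer_at; case: insubP => [s' _ <-|]; first by rewrite ffunE.
by rewrite negbK => /eqP ->; rewrite /code_bit big1 // => j _; rewrite mxE mul0r.
Qed.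

Lemma code_out_of_range k c w : (N.-1 <= k)%N -> code k c w = 0.
Proof.
move=> k_big; apply/ffunP => s; rewrite !ffunE; apply: big1 => j _.
by rewrite /edge_file insubN -?leqNgt // /file_bit mxE mulr0.
Qed.

Definition unit_mask (t : 'I_r) : mask := [ffun=> delta_mx 0 t].

(* Each term [j] appears twice at the same position [s + c j], with coefficients
   [s_j] and [s_j + (j == t)], so that only the term [j = t] survives. *)
Lemma code_bit_unit_mask (k : 'I_N.-1) t c w s :
  code_bit k c w s + code_bit k (c + unit_mask t) w (s + delta_mx 0 t) =
  file_bit (w (k, t)) (s + c t).
Proof.
rewrite /code_bit /edge_file valK -big_split (bigD1 t) //= big1 ?addr0 => [|j jt];
  rewrite !ffunE !mxE -addrA (addrCA (delta_mx 0 t)) addrr_lmodF2 addr0 -mulrDl.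
  by rewrite eqxx addrA addrr_F2 add0r mul1r.
by rewrite (negbTE jt) addr0 addrr_F2 mul0r.
Qed.

Lemma code_bit_add k c w w' s :
  code_bit k c (w + w') s = code_bit k c w s + code_bit k c w' s.
Proof.
rewrite -big_split; apply: eq_bigr => j _.
rewrite /edge_file /file_bit; case: insub => [k'|] /=.
  by rewrite !ffunE mxE mulrDr.
by rewrite mxE mulr0 addr0.
Qed.

Lemma code_add k c w w' : code k c (w + w') = code k c w + code k c w'.
Proof. by apply/ffunP => s; rewrite !ffunE code_bit_add. Qed.

Definition path_stor := @multigraph_stor N N.-1 r (@path_ends N).

Lemma edge_file_restr (i : 'I_N) k j w : (val i == k) || (val i == k.+1) ->
  edge_file (restr path_stor i w) k j = edge_file w k j.
Proof.
rewrite /edge_file; case: insubP => // k' _ <- ik.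
by rewrite ffunE /path_stor /multigraph_stor /= -!(inj_eq val_inj) /= ik.
Qed.

Definition mask_at (m : edge_masks) (k : nat) : mask :=
  if insub k is Some k' then m k' else 0.

Definition target_mask (th : path_file) (k : nat) : mask :=
  if k == val th.1 then unit_mask th.2 else 0.

Definition pir_query (th : path_file) (m : edge_masks) : {ffun 'I_N -> query} :=
  [ffun i : 'I_N => (if val i is i'.+1 then mask_at m i' + target_mask th i' else 0,
                    mask_at m i)].

Definition pir_answer (i : 'I_N) (q : query) (w : path_files) : answer :=
  (if val i is i'.+1 then code i' q.1 w else 0) + code i q.2 w.

Definition pir_decode (th : path_file) (qs : {ffun 'I_N -> query})
    (af : 'I_N -> answer) : file_t file_len :=
  let c := (qs (Ordinal (path_lt1 th.1))).2 th.2 in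
  let X := \sum_(i < N | (i < th.1.+1)%N) af i in
  let Y := \sum_(i < N | (th.1 < i)%N) af i in
  \row_b (answer_at X (file_pos b + c) + answer_at Y (file_pos b + c + delta_mx 0 th.2)).

Lemma pir_decodeK th m w :
  pir_decode th (pir_query th m) (fun i => pir_answer i (pir_query th m i) w) = w th.
Proof.
case: th => k t; set th := (k, t).
pose P j := code j (mask_at m j) w.
pose Q j := code j (mask_at m j + target_mask th j) w.
pose G (i : nat) := (if i is i'.+1 then Q i' else 0) + P i.
have answerE (i : 'I_N) : pir_answer i (pir_query th m i) w = G i.
  by rewrite /pir_answer ffunE /G; case: i => [[|i] ?].
have PQ0 j : j != val k -> P j + Q j = 0.
  by move=> /negbTE jk; rewrite /Q /target_mask jk addr0 addrr_ffunF2.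
have N_gt0 : (0 < N.-1)%N := leq_ltn_trans (leq0n k) (ltn_ord k).
have sum_low : \sum_(i < N | (i < k.+1)%N) G i = P k.
  rewrite -big_ord_widen ?path_lt1 // sum_shifted_pairs big1 ?add0r // => j _.
  by apply: PQ0; rewrite neq_ltn ltn_ord.
have sum_all : \sum_(i < N) G i = P k + Q k.
  rewrite -[in LHS](prednK (leq_trans N_gt0 (leq_pred N))) sum_shifted_pairs.
  rewrite {2}/P code_out_of_range // addr0 (bigD1 k) //= big1 ?addr0 // => j.
  exact: PQ0.
have sum_high : \sum_(i < N | (k < i)%N) G i = Q k.
  apply: (addrI (P k)); rewrite -sum_all [in RHS](bigID (fun i : 'I_N => (i < k.+1)%N)).
  by rewrite /= sum_low; congr (_ + _); apply: eq_bigl => i; rewrite -leqNgt.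
have sumE (p : pred 'I_N) : \sum_(i < N | p i) pir_answer i (pir_query th m i) w =
    \sum_(i < N | p i) G i by apply: eq_bigr => i _; exact: answerE.
rewrite /pir_decode !sumE /= sum_low sum_high ffunE /=.
apply/rowP => b; rewrite mxE !answer_at_code /P /Q /mask_at valK /target_mask eqxx.
by rewrite code_bit_unit_mask -addrA addrr_lmodF2 addr0 file_bit_pos.
Qed.

Definition local_query (m : edge_masks) (i : 'I_N) : query :=
  (if val i is i'.+1 then mask_at m i' else 0, mask_at m i).

(* Shifting the mask of edge [i - 1] by the target mask makes server [i]'s
   query independent of the desired file. *)
Lemma pir_query_local th i : exists2 h : edge_masks -> edge_masks,
  injective h & forall m, pir_query th (h m) i = local_query m i.
Proof.
pose d : edge_masks :=
  [ffun k : 'I_N.-1 => if val i == (val k).+1 then - target_mask th k else 0].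
exists (+%R^~ d); first exact: addIr.
move=> m; rewrite ffunE /local_query /mask_at /d; congr pair; last first.
  by case: insubP => // k _ ki; rewrite !ffunE ki ltn_eqF // addr0.
case Ei: (val i) => [|i'] //; case: insubP => [k _ ki|]; last first.
  by move=> /negP[]; move: (valP i); rewrite /= Ei; lia.
by rewrite !ffunE ki eqxx -ki subrK.
Qed.

Lemma pir_answer_restr i q w : pir_answer i q (restr path_stor i w) = pir_answer i q w.
Proof.
have codeE k c : (val i == k) || (val i == k.+1) ->
    code k c (restr path_stor i w) = code k c w.
  move=> ik; apply/ffunP => s; rewrite !ffunE; apply: eq_bigr => j _.
  by rewrite edge_file_restr.
rewrite /pir_answer codeE ?eqxx //; case: i codeE => [[|i] ?] //= codeE.
by rewrite codeE ?eqxx ?orbT.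
Qed.

Lemma pir_answer_add i q w w' :
  pir_answer i q (w + w') = pir_answer i q w + pir_answer i q w'.
Proof. by case: i => [[|i'] ?]; rewrite /pir_answer /= !code_add ?add0r // addrACA. Qed.

(* Position [x] of file [j] on edge [k] holds [a (x + c j)] when [j] is the
   chosen nonzero coordinate of [x + c j]; hence in [code k c w s] only the term
   of the chosen coordinate of [s] survives. *)
Lemma code_surj (k : 'I_N.-1) c a : exists w,
  code k c w = a /\ forall j c', j != val k -> code j c' w = 0.
Proof.
pose w : path_files := [ffun f => if f.1 == k then
  \row_b (let s := file_pos b + c f.2 in
          if [pick j | s ord0 j != 0] == Some f.2 then answer_at a s else 0)
  else 0].
exists w; split => [|j c' jk].
  apply/ffunP => s; rewrite !ffunE /code_bit /edge_file valK.
  under eq_bigr => j _ do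
    rewrite /file_bit ffunE eqxx mxE /file_pos enum_rankK -addrA addrr_lmodF2 addr0.
  case: pickP => [j0 s_j0|s0]; last first.
    case: s s0 => s /= s_nz s0; case/eqP: s_nz.
    by apply/rowP => j; rewrite mxE; apply/eqP/negbFE/s0.
  rewrite (bigD1 j0) //= eqxx [val s _ _]F2_neq0 // mul1r /answer_at valK big1 ?addr0 //.
  by move=> j j_j0; rewrite (inj_eq (@Some_inj _)) eq_sym (negbTE j_j0) mulr0.
apply/ffunP => s; rewrite !ffunE; apply: big1 => j' _.
rewrite /edge_file /file_bit; case: insubP => [k' _ k'j|]; last by rewrite mxE mulr0.
by rewrite ffunE -(inj_eq val_inj) k'j (negbTE jk) mxE mulr0.
Qed.

Lemma pir_answer_surj i q a : (1 < N)%N -> exists w, pir_answer i q w = a.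
Proof.
case: i => i i_lt N_gt1; rewrite /pir_answer /=.
have [i_edge|i_last] := ltnP i N.-1.
  have [w [wa w0]] := code_surj (Ordinal i_edge) q.2 a.
  exists w; rewrite {}wa; move: w0 => /= w0.
  case: i {i_lt i_edge} w0 => [|i] w0; first by rewrite add0r.
  by rewrite w0 ?add0r // ltn_eqF.
have i_pred : (i.-1 < N.-1)%N by lia.
have [w [wa w0]] := code_surj (Ordinal i_pred) q.1 a.
exists w; rewrite code_out_of_range // addr0.
move: wa => /= wa; case: i {i_lt i_pred w0} i_last wa => [|i] /=; first lia.
by move=> _ ->.
Qed.

End PathScheme.

Lemma file_lenE r : file_len r = (2 ^ r)%N.
Proof. by rewrite /file_len card_mx card_Fp // mul1n. Qed.

Lemma card_answer r : #|answer r| = (2 ^ (2 ^ r).-1)%N.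
Proof.
rewrite card_ffun card_sig card_Fp //.
have -> : #|[pred x : 'rV['F_2]_r | x != 0]| = #|predC1 (0 : 'rV['F_2]_r)|.
  by apply: eq_card => x; rewrite !inE.
by rewrite cardC1 card_mx card_Fp // mul1n.
Qed.

Section PirScheme.
Variables (R : realType) (N r : nat).
Hypothesis N_gt1 : (1 < N)%N.

Definition pir_scheme : scheme R N (path_file N r) (file_len r) :=
  @Scheme R N _ _ (query r) (answer r) (fun th => unif_image R (@pir_query N r th))
    (@pir_answer N r) (@pir_decode N r).

Lemma pir_prob_ans th i a : prob_ans (S:=pir_scheme) th i a = #|answer r|%:R^-1.
Proof.
rewrite /prob_ans /=; under eq_bigr do rewrite -mulr_sumr -mulrA.
rewrite sum_unif_image; under eq_bigr do
  rewrite (sum_fiber_additive _ (pir_answer_add i _) (fun b => pir_answer_surj i _ b N_gt1)).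
rewrite sumr_const -[#|xpredT|]/#|edge_masks N r| /unif.
set cM := #|edge_masks N r|; set cF := #|path_files N r|; set cA := #|answer r|.
have cM0 : cM%:R != 0 :> R := natr_card_neq0 R (0 : edge_masks N r).
have cF0 : cF%:R != 0 :> R := natr_card_neq0 R (0 : path_files N r).
have cA0 : cA%:R != 0 :> R := natr_card_neq0 R (0 : answer r).
by rewrite -[(_ * _) *+ cM]mulr_natr; field; rewrite cM0 cF0 cA0.
Qed.

Lemma pir_entropy th i :
  entropy_ans pir_scheme th i = log2 (#|answer r|%:R : R).
Proof.
apply: entropy_ans_unif (pir_prob_ans th i).
by apply/card_gt0P; exists 0.
Qed.

Lemma prob_view_local th i q a v :
  prob_view (@path_stor N r) (S:=pir_scheme) th i q a v =
  #|edge_masks N r|%:R^-1 * \sum_(m : edge_masks N r) \sum_(w : path_files N r)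
    unif R (path_file N r) (file_len r) *
    ((local_query m i == q) && (pir_answer i (local_query m i) w == a)
      && (restr (@path_stor N r) i w == v))%:R.
Proof.
rewrite /prob_view /=; under eq_bigr do (under eq_bigr do rewrite -mulrA; rewrite -mulr_sumr).
rewrite sum_unif_image; have [h h_inj hE] := pir_query_local th i.
by rewrite (reindex_inj h_inj); under eq_bigr do rewrite hE.
Qed.

Lemma pir_scheme_valid : valid_scheme (@path_stor N r) pir_scheme.
Proof.
split=> [th qs|th|i q w w' ww'|th qs w qs_pos|i th th' q a v] /=.
- exact: unif_image_ge0.
- by apply: unif_image_sum1; apply/card_gt0P; exists 0.
- by rewrite -pir_answer_restr ww' pir_answer_restr.
- by have [m <-] := unif_image_gt0 qs_pos; rewrite pir_decodeK.
- by rewrite !prob_view_local.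
Qed.

End PirScheme.

Lemma path_rateE (R : realType) N r : (0 < N)%N -> (0 < r)%N ->
  (2 ^ r)%N%:R / (N%:R * ((2 ^ r).-1)%N%:R) = 2 / N%:R * (2 - (2 ^+ r.-1)^-1) ^-1 :> R.
Proof.
case: r => // r N_gt0 _; rewrite expnS natrM natrX /=.
have pow_ge1 : 1 <= (2 : R) ^+ r by rewrite exprn_ege1 // ler1n.
have -> : ((2 * 2 ^ r).-1)%:R = 2 * 2%:R ^+ r - 1 :> R.
  by rewrite -natrX -natrM -subn1 natrB ?muln_gt0 ?expn_gt0.
have N_neq0 : N%:R != 0 :> R by rewrite pnatr_eq0 -lt0n.
have pow_neq0 : (2 : R) ^+ r != 0 by rewrite gt_eqF // (lt_le_trans _ pow_ge1).
have den_neq0 : 2 * (2 : R) ^+ r - 1 != 0 by rewrite gt_eqF // subr_gt0; lra.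
by field; rewrite N_neq0 pow_neq0 den_neq0.
Qed.

Theorem mainTheorem4 (R : realType) (N r : nat) :
  (2 <= N)%N -> (1 <= r)%N ->
  ((2 / N%:R * (2 - (2 ^+ r.-1)^-1)^-1 : R)%:E
     <= capacity_multigraph R (@path_ends N) r)%E.
Proof.
move=> N_gt1 r_gt0.
pose rate : R := (file_len r)%:R / (N%:R * log2 (#|answer r|%:R : R)).
have rate_achievable : rates (@path_stor N r) rate.
  exists (file_len r), (pir_scheme R N r); split; first exact: pir_scheme_valid.
  move=> th; rewrite /rate; congr (_ / _).
  by under eq_bigr do rewrite pir_entropy //; rewrite sumr_const card_ord mulr_natl.
apply: le_trans (ereal_sup_ubound _); last by exists rate.
by rewrite lee_fin /rate card_answer log2_expn file_lenE path_rateE // ltnW.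
Qed.
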